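(* (a) A sphere with $6$ punctures has an ideal triangulation satisfying (T4). (b) A sphere with $5$ punctures has an ideal triangulation satisfying (T3$\tfrac12$), but no ideal triangulation satisfying (T4). (c) A sphere with $4$ punctures has an ideal triangulation satisfying (T3), but no ideal triangulation satisfying (T3$\tfrac12$).
   Context: Arcs incident to a puncture are counted with multiplicity (an arc with both endpoints at the puncture counts twice). (T3): at each puncture at least three arcs of $T$ are incident. (T3$\tfrac12$): $T$ has (T3) and every arc of $T$ has an endpoint with at least four incident arcs. (T4): at each puncture at least four arcs of $T$ are incident. *)

From mathcomp Require Import all_boot all_order all_fingroup.
Set Implicit Arguments. Unset Strict Implicit. Unset Printing Implicit Defensive.
Import GroupScope.

(* Combinatorial model of an (ideal) triangulation of an oriented closed
   surface: a combinatorial map on a finite set of darts (half-arcs) D.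
   - [a] is the fixed-point-free involution pairing the two darts of an arc;
   - [s] is the rotation around punctures (vertices): its cycles are the
     punctures, and the cycle of a dart is the cyclically ordered list of arc
     ends at that puncture (so a loop arc contributes twice);
   - the faces are the cycles of [a * s] (x |-> s (a x)), all of length 3.
   Connectedness + Euler characteristic 2 make the surface a sphere, and the
   number of s-cycles is the number of punctures. Self-folded triangles are
   allowed (as in Fomin-Shapiro-Thurston). *)

Definition map_rel (D : finType) (s a : {perm D}) : rel D :=
  fun u v => (v == s u) || (v == a u).

Definition ideal_triang_sphere (n : nat) (D : finType) (s a : {perm D}) : Prop :=
  [/\ (forall x, a x != x /\ a (a x) = x),
      (forall x, #|porbit (a * s) x| = 3),
      (forall x y, connect (map_rel s a) x y),
      #|porbits s| + #|porbits (a * s)| = #|porbits a| + 2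
    & #|porbits s| = n].

Definition puncture_degree (D : finType) (s : {perm D}) (x : D) : nat :=
  #|porbit s x|.

Definition T3 (D : finType) (s a : {perm D}) : Prop :=
  forall x, 3 <= puncture_degree s x.

Definition T3half (D : finType) (s a : {perm D}) : Prop :=
  T3 s a /\
  forall x, 4 <= puncture_degree s x \/ 4 <= puncture_degree s (a x).

Definition T4 (D : finType) (s a : {perm D}) : Prop :=
  forall x, 4 <= puncture_degree s x.

From mathcomp Require Import all_boot all_order all_fingroup.
From mathcomp Require Import zify.
Set Implicit Arguments. Unset Strict Implicit. Unset Printing Implicit Defensive.

(* Counting darts three ways: they come in pairs (arcs), in triples (faces),
   and their number is the sum of the puncture degrees.  With Euler's formula
   this gives #darts = 6n - 12 for an n-punctured sphere, so the average degree
   6 - 12/n is below 4 for n <= 5, and for n = 4 the degree sum 12 leaves no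
   room above the minimum 3 allowed by (T3).  The positive cases are realised
   by the octahedron, the triangular bipyramid and the tetrahedron. *)

Section PorbitCounting.
Variable T : finType.
Implicit Types (s : {perm T}) (x : T).

Lemma sum_porbit_card s (F : nat -> nat) :
  \sum_x F #|porbit s x| = \sum_(A in porbits s) #|A| * F #|A|.
Proof.
rewrite (partition_big_imset (porbit s)) /=.
apply: eq_bigr => A /imsetP[y _ ->].
rewrite (eq_bigr (fun _ => F #|porbit s y|)); last by move=> i /eqP ->.
rewrite sum_nat_const; congr (_ * _); apply: eq_card => i.
by rewrite -eq_porbit_mem.
Qed.

Lemma card_sum_porbits s : #|T| = \sum_(A in porbits s) #|A|.
Proof.
rewrite -sum1_card (sum_porbit_card s (fun _ => 1)).
by apply: eq_bigr => A _; rewrite muln1.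
Qed.

Lemma card_porbits_const s k :
  (forall x, #|porbit s x| = k) -> #|porbits s| * k = #|T|.
Proof.
move=> sk; rewrite (card_sum_porbits s) -sum_nat_const.
by apply: eq_bigr => A /imsetP[y _ ->]; rewrite sk.
Qed.

(* With L a common multiple of the orbit lengths, each orbit contributes L. *)
Lemma card_porbits_weighted s L :
  (forall x, #|porbit s x| %| L) ->
  #|porbits s| * L = \sum_x L %/ #|porbit s x|.
Proof.
move=> dvdL; rewrite (sum_porbit_card s (fun k => L %/ k)) -sum_nat_const.
by apply: eq_bigr => A /imsetP[y _ ->]; rewrite mulnC divnK.
Qed.

Lemma card_porbits_ge s k :
  (forall x, k <= #|porbit s x|) -> #|porbits s| * k <= #|T|.
Proof.
move=> sk; rewrite (card_sum_porbits s) -sum_nat_const.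
by apply: leq_sum => A /imsetP[y _ ->].
Qed.

Lemma card_porbits_gt s k y :
  (forall x, k <= #|porbit s x|) -> k < #|porbit s y| ->
  #|porbits s| * k < #|T|.
Proof.
move=> sk sy; rewrite (card_sum_porbits s) -sum_nat_const.
have Ay : porbit s y \in porbits s by exact: imset_f.
rewrite (bigD1 _ Ay) [X in _ < X](bigD1 _ Ay) /= -addSn leq_add //.
by apply: leq_sum => A /andP[/imsetP[z _ ->] _].
Qed.

Lemma iter_cycle_mul s x k q : iter k s x = x -> iter (q * k) s x = x.
Proof. by move=> sk; elim: q => [|q IH] //; rewrite mulSn iterD IH. Qed.

Lemma card_porbit_traject s x k :
  0 < k -> iter k s x = x -> uniq (traject s x k) -> #|porbit s x| = k.
Proof.
move=> k_gt0 sk uniq_k.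
have orbit_k : porbit s x =i traject s x k.
  move=> y; apply/idP/idP => [/porbitP[i ->]|/trajectP[i _ ->]]; last first.
    by rewrite -permX mem_porbit.
  apply/trajectP; exists (i %% k); first by rewrite ltn_mod.
  by rewrite permX {1}(divn_eq i k) addnC iterD iter_cycle_mul.
by rewrite (eq_card orbit_k) (card_uniqP uniq_k) size_traject.
Qed.

Lemma card_porbit_involution s x : s x != x -> s (s x) = x -> #|porbit s x| = 2.
Proof. by move=> sx ssx; apply: card_porbit_traject => //=; rewrite inE eq_sym sx. Qed.

End PorbitCounting.

Lemma map_rel_connect_sym (T : finType) (s a : {perm T}) :
  involutive a -> connect_sym (map_rel s a).
Proof.
move=> aK; suff flip x y : connect (map_rel s a) x y -> connect (map_rel s a) y x.
  by move=> x y; apply/idP/idP; apply: flip.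
move=> cxy; have {cxy} : connect [rel u v | map_rel s a v u] y x by rewrite connect_rev.
apply: connect_sub => u v /= /orP[] /eqP ->; last first.
  by apply: connect1; rewrite /map_rel aK eqxx orbT.
have /connectP[p sp last_p] : fconnect s (s v) v.
  by rewrite (fconnect_sym (@perm_inj _ s)) fconnect1.
apply/connectP; exists p => //; apply: (sub_path _ sp) => w z /eqP <-.
by rewrite /map_rel eqxx.
Qed.

Lemma connect_ord_from0 m (e : rel 'I_m) :
  (forall y : 'I_m, 0 < y -> exists2 x : 'I_m, x < y & e x y) ->
  forall x y : 'I_m, val x = 0 -> connect e x y.
Proof.
move=> reach x y x0; have [k] := ubnP (val y).
elim: k y => // k IH y /ltnSE le_y.
have [y0 | y_gt0] := posnP (val y).
  by have -> : y = x by apply: val_inj; rewrite y0 x0.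
have [z zy ezy] := reach y y_gt0.
exact: connect_trans (IH z (leq_trans zy le_y)) (connect1 ezy).
Qed.

Section TriangulationCounting.
Variables (n : nat) (D : finType) (s a : {perm D}).
Hypothesis tri : ideal_triang_sphere n s a.

Lemma ideal_triang_card_darts : #|D| + 12 = 6 * n.
Proof.
case: tri => arc_inv face3 _ euler <-.
have arcs := card_porbits_const (fun x =>
  card_porbit_involution (proj1 (arc_inv x)) (proj2 (arc_inv x))).
have faces := card_porbits_const face3.
lia.
Qed.

Let card_punctures : #|porbits s| = n.
Proof. by case: tri. Qed.

Lemma T4_punctures : T4 s a -> 6 <= n.
Proof.
move=> deg4; have := card_porbits_ge deg4.
rewrite card_punctures; have := ideal_triang_card_darts; lia.
Qed.

Lemma T3half_punctures : T3half s a -> 5 <= n.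
Proof.
case=> deg3 deg4; have darts := ideal_triang_card_darts.
have : 0 < #|D|.
  have : #|porbits s| * 1 <= #|D|.
    by apply: card_porbits_ge => y; rewrite lt0n card_porbit_neq0.
  by rewrite card_punctures; lia.
case/card_gt0P=> x _.
have [y y4] : exists y, 3 < puncture_degree s y.
  by case: (deg4 x) => ?; [exists x | exists (a x)].
have := card_porbits_gt deg3 y4.
rewrite card_punctures; lia.
Qed.

End TriangulationCounting.

Section IterMorph.
Variables (T U : Type) (h : T -> U) (f : T -> T) (g : U -> U).
Hypothesis fg : {morph h : x / f x >-> g x}.

Lemma iter_morph k : {morph h : x / iter k f x >-> iter k g x}.
Proof. by elim: k => [|k IH] x //=; rewrite fg IH. Qed.

Lemma traject_morph x k : map h (traject f x k) = traject g (h x) k.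
Proof. by elim: k x => [|k IH] x //=; rewrite IH fg. Qed.

End IterMorph.

Definition on_cycle (f : nat -> nat) (k i : nat) : bool :=
  [&& 0 < k, iter k f i == i & uniq (traject f i k)].

Lemma card_porbit_on_cycle m (s : {perm 'I_m}) (f : nat -> nat) k (x : 'I_m) :
  {morph val : y / s y >-> f y} -> on_cycle f k x -> #|porbit s x| = k.
Proof.
move=> sf /and3P[k_gt0 /eqP fk uniq_k]; apply: card_porbit_traject => //.
  by apply: val_inj; rewrite (iter_morph sf).
by rewrite -(map_inj_uniq val_inj) (traject_morph sf).
Qed.

Section NatPerm.
Variables (m : nat) (g : nat -> nat).
Hypothesis g_perm : perm_eq (map g (iota 0 m)) (iota 0 m).

Lemma nat_perm_lt (x : 'I_m) : g x < m.
Proof.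
have : g x \in map g (iota 0 m) by rewrite map_f // mem_iota ltn_ord.
by rewrite (perm_mem g_perm) mem_iota.
Qed.

Lemma nat_perm_inj : injective (fun x : 'I_m => insubd x (g x)).
Proof.
move=> x y /(congr1 val); rewrite !val_insubd !nat_perm_lt => gxy.
have /uniqP uniq_g : uniq (map g (iota 0 m)) by rewrite (perm_uniq g_perm) iota_uniq.
have nth_g (z : 'I_m) : nth 0 (map g (iota 0 m)) z = g z.
  by rewrite (nth_map 0) ?size_iota // nth_iota.
by apply: val_inj; apply: (uniq_g 0); rewrite ?inE ?size_map ?size_iota ?ltn_ord ?nth_g.
Qed.

Definition nat_perm : {perm 'I_m} := perm nat_perm_inj.

Lemma nat_permE : {morph val : x / nat_perm x >-> g x}.
Proof. by move=> x; rewrite permE val_insubd nat_perm_lt. Qed.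

End NatPerm.

Definition dart_ok (s a d : nat -> nat) (i : nat) : bool :=
  [&& a i != i, a (a i) == i, on_cycle (s \o a) 3 i & on_cycle s (d i) i].

Definition reached_in_order (s a : nat -> nat) (m : nat) : bool :=
  all (fun i => has (fun j => (s j == i) || (a j == i)) (iota 0 i)) (iota 1 m.-1).

(* Darts are 0, ..., m-1; [rot], [arc] list the images under s and a, and
   [deg] the length of the s-cycle through each dart, so that the number of
   punctures is the sum of 1/deg over all darts, checked here scaled by L. *)
Definition triang_data (n : nat) (rot arc deg : seq nat) : bool :=
  let m := size rot in
  let s := nth 0 rot in let a := nth 0 arc in let L := foldr lcmn 1 deg in
  [&& perm_eq (map s (iota 0 m)) (iota 0 m), perm_eq (map a (iota 0 m)) (iota 0 m),
      all (dart_ok s a (nth 0 deg)) (iota 0 m), reached_in_order s a m &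
      [&& size deg == m, 0 < L, sumn [seq L %/ k | k <- deg] == n * L
        & 6 * n == m + 12]].

Lemma dvdn_foldr_lcmn (ks : seq nat) k : k \in ks -> k %| foldr lcmn 1 ks.
Proof.
elim: ks => //= k' ks IH; rewrite inE => /orP[/eqP -> | /IH]; first exact: dvdn_lcml.
by move/dvdn_trans; apply; exact: dvdn_lcmr.
Qed.

Lemma sum_ord_sumn m (F : nat -> nat) :
  \sum_(x < m) F x = sumn [seq F i | i <- iota 0 m].
Proof. by rewrite -(big_mkord xpredT) sumnE big_map /index_iota subn0. Qed.

Section TriangData.
Variables (n : nat) (rot arc deg : seq nat).
Hypothesis data : triang_data n rot arc deg.

Local Notation m := (size rot).
Local Notation L := (foldr lcmn 1 deg).

Let rot_perm : perm_eq (map (nth 0 rot) (iota 0 m)) (iota 0 m).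
Proof. by case/and5P: data. Qed.

Let arc_perm : perm_eq (map (nth 0 arc) (iota 0 m)) (iota 0 m).
Proof. by case/and5P: data. Qed.

Let s : {perm 'I_m} := nat_perm rot_perm.
Let a : {perm 'I_m} := nat_perm arc_perm.

Let dart (x : 'I_m) : dart_ok (nth 0 rot) (nth 0 arc) (nth 0 deg) x.
Proof. by case/and5P: data => _ _ /allP-> //; rewrite mem_iota ltn_ord. Qed.

Let aK : involutive a.
Proof.
by move=> x; apply: val_inj; rewrite !nat_permE; case/and4P: (dart x) => _ /eqP.
Qed.

Let a_fix (x : 'I_m) : a x != x.
Proof. by rewrite -val_eqE nat_permE; case/and4P: (dart x). Qed.

Let card_face (x : 'I_m) : #|porbit (a * s) x| = 3.
Proof.
apply: (card_porbit_on_cycle (f := nth 0 rot \o nth 0 arc)).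
  by move=> y; rewrite permM !nat_permE.
by case/and4P: (dart x).
Qed.

Let card_puncture (x : 'I_m) : #|porbit s x| = nth 0 deg x.
Proof.
apply: (card_porbit_on_cycle (nat_permE rot_perm)).
by case/and4P: (dart x).
Qed.

Let connected x y : connect (map_rel s a) x y.
Proof.
have m_gt0 : 0 < m by apply: leq_ltn_trans (ltn_ord x).
have reach (z : 'I_m) : 0 < z -> exists2 w : 'I_m, w < z & map_rel s a w z.
  move=> z_gt0; case/and5P: data => _ _ _ /allP/(_ (val z)) + _.
  rewrite mem_iota z_gt0 add1n prednK // ltn_ord => /(_ isT) /hasP[j].
  rewrite mem_iota add0n => j_lt_z sa_j.
  exists (Ordinal (ltn_trans j_lt_z (ltn_ord z))) => //.
  by rewrite /map_rel -!val_eqE !nat_permE !(eq_sym (val z)).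
have from0 := @connect_ord_from0 m (map_rel s a) reach (Ordinal m_gt0) _ erefl.
by rewrite (connect_trans _ (from0 y)) // (map_rel_connect_sym _ aK) from0.
Qed.

Let card_punctures : #|porbits s| = n.
Proof.
case/and5P: data => _ _ _ _ /and4P[/eqP size_deg L_gt0 /eqP sum_deg _].
have dvd_L x : #|porbit s x| %| L.
  by rewrite card_puncture dvdn_foldr_lcmn // mem_nth // size_deg.
apply/eqP; rewrite -(eqn_pmul2r L_gt0) card_porbits_weighted //.
rewrite (eq_bigr (fun x : 'I_m => L %/ nth 0 deg x)) => [|x _]; last first.
  by rewrite card_puncture.
rewrite (sum_ord_sumn _ (fun i => L %/ nth 0 deg i)) -sum_deg.
by rewrite -[X in _ == sumn (map _ X)](mkseq_nth 0 deg) size_deg -map_comp.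
Qed.

Lemma triang_data_sound :
  exists s a : {perm 'I_m}, ideal_triang_sphere n s a /\
    forall x, puncture_degree s x = nth 0 deg x /\ val (a x) = nth 0 arc x.
Proof.
exists s, a; split => [|x]; last by rewrite /puncture_degree card_puncture nat_permE.
have arcs := card_porbits_const (fun x => card_porbit_involution (a_fix x) (aK x)).
have faces := card_porbits_const card_face.
case/and5P: data => _ _ _ _ /and4P[_ _ _ /eqP euler].
split=> [x||||]; [exact: (conj (a_fix x) (aK x)) | exact: card_face |
  exact: connected | | exact: card_punctures].
rewrite card_punctures; move: arcs faces; rewrite card_ord.
set Na := #|porbits a|; set Nf := #|porbits (a * s)|; lia.
Qed.

End TriangData.

Lemma triang_data_realize n rot arc deg (Q : nat -> nat -> bool) :
  triang_data n rot arc deg ->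
  all (fun i => Q (nth 0 deg i) (nth 0 deg (nth 0 arc i))) (iota 0 (size rot)) ->
  exists s a : {perm 'I_(size rot)}, ideal_triang_sphere n s a /\
    forall x, Q (puncture_degree s x) (puncture_degree s (a x)).
Proof.
move=> /triang_data_sound[s [a [tri sa]]] /allP Q_deg; exists s, a; split=> // x.
rewrite (sa x).1 (sa (a x)).1 (sa x).2.
by apply: Q_deg; rewrite mem_iota ltn_ord.
Qed.

Definition octahedron_rot := [:: 1; 3; 5; 6; 8; 9; 0; 12; 13; 14; 11; 16;
  17; 18; 2; 20; 21; 22; 4; 15; 23; 10; 7; 19].
Definition octahedron_arc := [:: 2; 4; 0; 7; 1; 10; 11; 3; 14; 15; 5; 6;
  18; 19; 8; 9; 22; 23; 12; 13; 21; 20; 16; 17].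
Definition octahedron_deg := nseq 24 4.

Definition bipyramid_rot :=
  [:: 1; 3; 5; 0; 7; 8; 10; 11; 12; 6; 14; 15; 2; 17; 9; 4; 13; 16].
Definition bipyramid_arc :=
  [:: 2; 4; 0; 6; 1; 9; 3; 12; 13; 5; 15; 16; 7; 8; 17; 10; 11; 14].
Definition bipyramid_deg :=
  [:: 3; 3; 4; 3; 4; 4; 4; 4; 4; 4; 4; 4; 4; 3; 4; 4; 3; 3].

Definition tetrahedron_rot := [:: 1; 3; 5; 0; 7; 8; 10; 11; 2; 6; 9; 4].
Definition tetrahedron_arc := [:: 2; 4; 0; 6; 1; 9; 3; 8; 7; 5; 11; 10].
Definition tetrahedron_deg := nseq 12 3.

Lemma octahedron_T4 :
  exists s a : {perm 'I_24}, ideal_triang_sphere 6 s a /\ T4 s a.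
Proof.
have [s [a [tri deg4]]] := @triang_data_realize 6 octahedron_rot octahedron_arc
  octahedron_deg (fun d _ => 3 < d)
  (ltac:(by vm_compute)) (ltac:(by vm_compute)).
by exists s, a.
Qed.

Lemma bipyramid_T3half :
  exists s a : {perm 'I_18}, ideal_triang_sphere 5 s a /\ T3half s a.
Proof.
have [s [a [tri deg]]] := @triang_data_realize 5 bipyramid_rot bipyramid_arc
  bipyramid_deg (fun d d' => (2 < d) && ((3 < d) || (3 < d')))
  (ltac:(by vm_compute)) (ltac:(by vm_compute)).
by exists s, a; split=> //; split=> x; have /andP[? /orP] := deg x.
Qed.

Lemma tetrahedron_T3 :
  exists s a : {perm 'I_12}, ideal_triang_sphere 4 s a /\ T3 s a.
Proof.
have [s [a [tri deg3]]] := @triang_data_realize 4 tetrahedron_rot tetrahedron_arc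
  tetrahedron_deg (fun d _ => 2 < d)
  (ltac:(by vm_compute)) (ltac:(by vm_compute)).
by exists s, a.
Qed.

Theorem lemma5p4 :
  (exists (m : nat) (s a : {perm 'I_m}), ideal_triang_sphere 6 s a /\ T4 s a) /\
  ((exists (m : nat) (s a : {perm 'I_m}), ideal_triang_sphere 5 s a /\ T3half s a) /\
   ~ (exists (m : nat) (s a : {perm 'I_m}), ideal_triang_sphere 5 s a /\ T4 s a)) /\
  ((exists (m : nat) (s a : {perm 'I_m}), ideal_triang_sphere 4 s a /\ T3 s a) /\
   ~ (exists (m : nat) (s a : {perm 'I_m}), ideal_triang_sphere 4 s a /\ T3half s a)).
Proof.
split; [|split; split].
- exact: ex_intro octahedron_T4.
- exact: ex_intro bipyramid_T3half.
- by case=> m [s [a [/T4_punctures]]] /[apply].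
- exact: ex_intro tetrahedron_T3.
- by case=> m [s [a [/T3half_punctures]]] /[apply].
Qed.
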